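(* Let $F$ be the elementary cellular automaton with rule number 104. For every nonempty finite word $u\in\{0,1\}^*$, the deterministic communication complexity of $\textsc{SInv}_{F,u}$ restricted to inputs of length $n$ is bounded by a constant independent of $n$.
   Context: An elementary cellular automaton (ECA) with rule number $N\in\{0,\dots,255\}$ is the map $F:\{0,1\}^{\mathbb Z}\to\{0,1\}^{\mathbb Z}$ given by $F(x)_i=f(x_{i-1},x_i,x_{i+1})$. Here the local rule $f:\{0,1\}^3\to\{0,1\}$ is determined by $N=\sum_{a,b,c\in\{0,1\}}2^{4a+2b+c}f(a,b,c)$. For a nonempty finite word $u$, $p_u\in\{0,1\}^{\mathbb Z}$ is defined by $(p_u)_i=u_{i\bmod |u|}$. For a finite word $x$, $p_u[x]$ is the configuration equal to $x$ on positions $0,\dots,|x|-1$ and to $p_u$ elsewhere. $\textsc{SInv}_{F,u}$ is the decision problem: on input a finite word $x$, decide whether there is an integer $w$ such that for all $t\ge0$ the set of positions where $F^t(p_u)$ and $F^t(p_u[x])$ differ is contained in an interval of length $w$. For each $n$, it is regarded as a function $\{0,1\}^n\to\{0,1\}$. For a function $g:X\times Y\to Z$, $D(g)$ is the minimal depth of a deterministic two-party protocol computing $g$. In such a protocol, Alice knows $x$ and Bob knows $y$. The protocol is a binary tree: each internal node is labelled by a function of Alice's input only or of Bob's input only, with values in $\{\text{left},\text{right}\}$, and each leaf is labelled by an output value. For $g:\{0,1\}^m\to Z$, set $D(g)=\max_{0\le i<m}D(g_i)$, where $g_i:\{0,1\}^i\times\{0,1\}^{m-i}\to Z$ is $g_i(x,y)=g(xy)$.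 *)

From mathcomp Require Import all_boot.
From Stdlib Require Import ZArith.

Set Implicit Arguments.
Unset Strict Implicit.
Unset Printing Implicit Defensive.

Definition config := Z -> bool.

Definition local_rule (N : nat) (a b c : bool) : bool :=
  Nat.testbit N (4 * nat_of_bool a + 2 * nat_of_bool b + nat_of_bool c).

Definition eca (N : nat) (x : config) : config :=
  fun i => local_rule N (x (i - 1)%Z) (x i) (x (i + 1)%Z).

Definition eca_iter (N : nat) (t : nat) (x : config) : config :=
  Nat.iter t (eca N) x.

Definition periodic (u : seq bool) : config :=
  fun i => nth false u (Z.to_nat (i mod Z.of_nat (size u))%Z).

Definition patch (u x : seq bool) : config :=
  fun i => if ((0 <=? i)%Z && (i <? Z.of_nat (size x))%Z)
           then nth false x (Z.to_nat i) else periodic u i.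

Definition SInv (N : nat) (u x : seq bool) : Prop :=
  exists w : Z, forall t : nat, exists a : Z, forall i : Z,
    eca_iter N t (periodic u) i <> eca_iter N t (patch u x) i ->
    (a <= i < a + w)%Z.

Inductive protocol (X Y : Type) : Type :=
  | PLeaf : bool -> protocol X Y
  | PAlice : (X -> bool) -> protocol X Y -> protocol X Y -> protocol X Y
  | PBob : (Y -> bool) -> protocol X Y -> protocol X Y -> protocol X Y.

Fixpoint prot_eval (X Y : Type) (p : protocol X Y) (x : X) (y : Y) : bool :=
  match p with
  | PLeaf b => b
  | PAlice f l r => if f x then prot_eval l x y else prot_eval r x y
  | PBob f l r => if f y then prot_eval l x y else prot_eval r x y
  end.

Fixpoint prot_depth (X Y : Type) (p : protocol X Y) : nat :=
  match p with
  | PLeaf _ => 0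
  | PAlice _ l r => (maxn (prot_depth l) (prot_depth r)).+1
  | PBob _ l r => (maxn (prot_depth l) (prot_depth r)).+1
  end.

(* D(SInv_{F,u} restricted to {0,1}^n) <= c :
   for every split point 0 <= i < n, some protocol of depth <= c, with Alice
   holding the first i bits and Bob the remaining n - i bits, computes
   (x, y) |-> SInv(xy). *)
Definition SInv_cc_le (N : nat) (u : seq bool) (n c : nat) : Prop :=
  forall i : nat, i < n ->
    exists p : protocol (i.-tuple bool) ((n - i).-tuple bool),
      prot_depth p <= c /\
      forall (x : i.-tuple bool) (y : (n - i).-tuple bool),
        prot_eval p x y = true <-> SInv N u (tval x ++ tval y).

From Stdlib Require Import ZArith Lia Classical.
From mathcomp Require Import all_boot zify.

Set Implicit Arguments.
Unset Strict Implicit.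
Unset Printing Implicit Defensive.

(* Rule 104 sets a cell to 1 iff exactly two of the three cells it reads are 1, so a pair 00
   is never destroyed and no information crosses it: it is a wall.

   If some iterate of p_u contains a wall, then by periodicity it has walls arbitrarily far on
   both sides; taken outside the light cone of the patch, two of them confine the difference
   between the orbits of p_u and p_u[x] forever, so SInv holds for every x.

   Otherwise SInv(x) holds iff x agrees with p_u. If it does not, either the patched orbit
   creates a wall within three steps, and walls spread by at least one cell per three steps in
   both directions (a finite check), so the difference set, which meets every wall because the
   orbit of p_u has none, is unbounded; or it creates none, and then each cell is determined by
   the six cells to its right (another finite check), so agreement with p_u to the right of the
   patch propagates through the patch.

   Hence the protocol is trivial in the first case, and in the second Alice and Bob each
   compare their half of the input with p_u. *)

Lemma eca_iterS N t y : eca_iter N t.+1 y = eca N (eca_iter N t y).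
Proof. by []. Qed.

Lemma eca_iterD N a b y : eca_iter N (a + b) y = eca_iter N a (eca_iter N b y).
Proof. by elim: a => [//|a IH]; rewrite addSn !eca_iterS IH. Qed.

Lemma eca_iter_ext N y z : y =1 z -> forall t, eca_iter N t y =1 eca_iter N t z.
Proof. by move=> yz; elim=> [|t IH] i //; rewrite !eca_iterS /eca !IH. Qed.

Lemma eca_iter_agree_outside N y z (a b : Z) :
  (forall i, (i < a \/ b <= i)%Z -> y i = z i) ->
  forall t i, (i < a - Z.of_nat t \/ b + Z.of_nat t <= i)%Z ->
    eca_iter N t y i = eca_iter N t z i.
Proof.
move=> yz; elim=> [|t IH] i Hi; first by apply: yz; lia.
by rewrite !eca_iterS /eca !IH //; lia.
Qed.

Lemma eca_iter_periodic N (s : Z) y : (forall i, y (i + s)%Z = y i) ->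
  forall t i, eca_iter N t y (i + s)%Z = eca_iter N t y i.
Proof.
move=> ys; elim=> [|t IH] i; first exact: ys.
rewrite !eca_iterS /eca IH -(IH (i - 1)%Z) -(IH (i + 1)%Z).
by congr local_rule; congr eca_iter; lia.
Qed.

Definition mirror (y : config) : config := fun i => y (- i)%Z.

Lemma eca_iter_mirror N : (forall a b c, local_rule N a b c = local_rule N c b a) ->
  forall t y, eca_iter N t (mirror y) =1 mirror (eca_iter N t y).
Proof.
move=> sym; elim=> [|t IH] y i; first by [].
rewrite !eca_iterS /eca /mirror !IH /mirror sym.
by congr local_rule; congr eca_iter; lia.
Qed.

Lemma periodic_shift u (k i : Z) : periodic u (i + k * Z.of_nat (size u))%Z = periodic u i.
Proof. by rewrite /periodic Z_mod_plus_full. Qed.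

Lemma patch_out u w i : (i < 0 \/ Z.of_nat (size w) <= i)%Z -> patch u w i = periodic u i.
Proof. by rewrite /patch; case: Z.leb_spec; case: Z.ltb_spec => //=; lia. Qed.

Lemma patch_in u w k : k < size w -> patch u w (Z.of_nat k) = nth false w k.
Proof.
move=> kw; rewrite /patch Nat2Z.id.
by case: Z.leb_spec; case: Z.ltb_spec => //=; lia.
Qed.

Lemma eca_iter_patch_out N u w t i :
  (i < - Z.of_nat t \/ Z.of_nat (size w) + Z.of_nat t <= i)%Z ->
  eca_iter N t (patch u w) i = eca_iter N t (periodic u) i.
Proof.
move=> it; apply: (@eca_iter_agree_outside _ _ _ 0%Z (Z.of_nat (size w))); last lia.
exact: patch_out.
Qed.

Definition matches (g : nat -> bool) (w : seq bool) : bool :=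
  all (fun k => nth false w k == g k) (iota 0 (size w)).

Lemma matchesP g w : reflect (forall k, k < size w -> nth false w k = g k) (matches g w).
Proof.
apply: (iffP allP) => gw k; first by move=> kw; apply/eqP/gw; rewrite mem_iota.
by rewrite mem_iota => /andP [_ kw]; apply/eqP/gw.
Qed.

Lemma matches_cat g x y :
  matches g (x ++ y) = matches g x && matches (fun k => g (size x + k)) y.
Proof.
rewrite /matches size_cat iotaD all_cat add0n.
rewrite -[in iota (size x)](addn0 (size x)) iotaDl all_map.
congr andb; apply: eq_in_all => k; rewrite mem_iota add0n => /andP [_ k_lt] /=.
  by rewrite nth_cat k_lt.
by rewrite nth_cat ltnNge leq_addr addKn.
Qed.

Lemma patch_matches u w :
  matches (fun k => periodic u (Z.of_nat k)) w -> patch u w =1 periodic u.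
Proof.
move=> /matchesP wu i; rewrite /patch; case: Z.leb_spec; case: Z.ltb_spec => //= iw i0.
by rewrite wu ?Z2Nat.id //; lia.
Qed.

Definition window (y : config) (s : Z) (L : nat) : seq bool :=
  mkseq (fun k => y (s + Z.of_nat k)%Z) L.

Definition step_word N (w : seq bool) : seq bool :=
  mkseq (fun k => local_rule N (nth false w k) (nth false w k.+1) (nth false w k.+2))
        (size w - 2).

Lemma step_word_window N y s L : step_word N (window y s L.+2) = window (eca N y) (s + 1) L.
Proof.
apply: (@eq_from_nth _ false) => [|k]; rewrite !size_mkseq; first lia.
move=> Hk; rewrite !nth_mkseq ?size_mkseq; try lia.
rewrite /eca; congr local_rule; congr y; lia.
Qed.

Lemma iter_step_word_window N y s L j :
  iter j (step_word N) (window y s (L + 2 * j)) = window (eca_iter N j y) (s + Z.of_nat j) L.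
Proof.
elim: j L s => [|j IH] L s; first by rewrite addn0 Z.add_0_r.
rewrite (_ : L + 2 * j.+1 = L.+2 + 2 * j); last lia.
rewrite iterS IH step_word_window; congr window; lia.
Qed.

Fixpoint words (n : nat) : seq (seq bool) :=
  if n is n'.+1 then [seq b :: w | b <- [:: true; false], w <- words n'] else [:: [::]].

Lemma mem_words n w : size w = n -> w \in words n.
Proof.
move<-; elim: w => [//|b w IH] /=.
by case: b; rewrite !mem_cat map_f ?orbT.
Qed.

Lemma all_words_window (P : pred (seq bool)) y s L : all P (words L) -> P (window y s L).
Proof. by move=> /allP; apply; apply: mem_words; rewrite size_mkseq. Qed.

Definition zero_pair (y : config) (p : Z) : bool := ~~ y p && ~~ y (p + 1)%Z.

Definition word_zero_pair (w : seq bool) (k : nat) : bool :=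
  ~~ nth false w k && ~~ nth false w k.+1.

Lemma word_zero_pair_window y s L k : k.+1 < L ->
  word_zero_pair (window y s L) k = zero_pair y (s + Z.of_nat k).
Proof.
move=> kL; rewrite /word_zero_pair /zero_pair !nth_mkseq; try lia.
by rewrite (_ : (s + Z.of_nat k.+1 = s + Z.of_nat k + 1)%Z); last lia.
Qed.

Definition pair_free_word (w : seq bool) : bool :=
  ~~ has (word_zero_pair w) (iota 0 (size w).-1).

Lemma pair_free_word_window y s L :
  (forall p, ~~ zero_pair y p) -> pair_free_word (window y s L).
Proof.
move=> yfree; apply/hasPn => k; rewrite size_mkseq mem_iota => /andP [_ kL].
rewrite word_zero_pair_window ?yfree //; lia.
Qed.

Lemma zero_pair_periodic N (s : Z) y t p : (forall i, y (i + s)%Z = y i) ->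
  zero_pair (eca_iter N t y) p -> zero_pair (eca_iter N t y) (p + s).
Proof.
move=> ys; have per := eca_iter_periodic N ys t.
by rewrite /zero_pair per (_ : (p + s + 1 = p + 1 + s)%Z) ?per //; lia.
Qed.

Lemma zero_pair_mirror y p : zero_pair (mirror y) (- p - 1) = zero_pair y p.
Proof. by rewrite /zero_pair /mirror andbC; congr (~~ y _ && ~~ y _); lia. Qed.

Lemma rule104_sym a b c : local_rule 104 a b c = local_rule 104 c b a.
Proof. by case: a; case: b; case: c. Qed.

Lemma zero_pair_eca104 y p : zero_pair y p -> zero_pair (eca 104 y) p.
Proof.
case/andP => /negbTE y0 /negbTE y1; rewrite /zero_pair /eca (_ : (p + 1 - 1 = p)%Z); last lia.
by rewrite y0 y1; case: (y (p - 1)%Z); case: (y (p + 1 + 1)%Z).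
Qed.

Lemma zero_pair_iter104 y p t : zero_pair y p -> zero_pair (eca_iter 104 t y) p.
Proof. by move=> yp; elim: t => [//|t IH]; rewrite eca_iterS zero_pair_eca104. Qed.

Lemma eca104_wall_right y z R : zero_pair z R -> (forall i, (R <= i)%Z -> y i = z i) ->
  forall t i, (R <= i)%Z -> eca_iter 104 t y i = eca_iter 104 t z i.
Proof.
move=> zR yz; elim=> [|t IH] i Ri; first exact: yz.
have /andP [/negbTE z0 /negbTE z1] := zero_pair_iter104 t zR.
rewrite !eca_iterS /eca; case: (Z.eq_dec i R) => [->|iR]; last by rewrite !IH //; lia.
rewrite (IH R) ?(IH (R + 1)%Z) ?z0 ?z1; try lia.
by case: (eca_iter 104 t y (R - 1)%Z); case: (eca_iter 104 t z (R - 1)%Z).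
Qed.

Lemma eca104_wall_left y z Q : zero_pair z Q -> (forall i, (i <= Q + 1)%Z -> y i = z i) ->
  forall t i, (i <= Q + 1)%Z -> eca_iter 104 t y i = eca_iter 104 t z i.
Proof.
move=> zQ yz t i iQ.
rewrite -zero_pair_mirror in zQ.
have := @eca104_wall_right (mirror y) (mirror z) _ zQ _ t (- i)%Z.
rewrite !(eca_iter_mirror rule104_sym) /mirror !Z.opp_involutive; apply; last lia.
by move=> j jQ; apply: yz; lia.
Qed.

(* A window on cells R-2 .. R+9 around a wall at R; after three steps it covers R+1 .. R+6. *)
Definition spread_check : bool :=
  all (fun w => word_zero_pair w 2 ==>
                has (word_zero_pair (iter 3 (step_word 104) w)) (iota 0 5)) (words 12).

Lemma spread_check_ok : spread_check.
Proof. by vm_compute. Qed.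

Lemma zero_pair_spreads_right y R : zero_pair y R ->
  exists2 q, (R < q)%Z & zero_pair (eca_iter 104 3 y) q.
Proof.
move=> yR; move: spread_check_ok => /(all_words_window y (R - 2)%Z); cbv beta.
rewrite word_zero_pair_window // (_ : (R - 2 + Z.of_nat 2 = R)%Z); last lia.
rewrite yR (iter_step_word_window _ _ _ 6) => /hasP [k]; rewrite mem_iota => /andP [_ k5].
rewrite word_zero_pair_window; last lia.
by exists (R - 2 + Z.of_nat 3 + Z.of_nat k)%Z; first lia.
Qed.

Lemma zero_pair_spreads_left y R : zero_pair y R ->
  exists2 q, (q < R)%Z & zero_pair (eca_iter 104 3 y) q.
Proof.
rewrite -zero_pair_mirror => /zero_pair_spreads_right [q Rq].
rewrite /zero_pair !(eca_iter_mirror rule104_sym) -/(zero_pair _ _).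
rewrite (_ : q = (- (- q - 1) - 1)%Z); last lia.
by rewrite zero_pair_mirror; exists (- q - 1)%Z; first lia.
Qed.

Lemma zero_pairs_spread y p m : zero_pair y p ->
  exists q1 q2, [/\ (p + Z.of_nat m <= q1)%Z, (q2 <= p - Z.of_nat m)%Z,
    zero_pair (eca_iter 104 (3 * m) y) q1 & zero_pair (eca_iter 104 (3 * m) y) q2].
Proof.
move=> yp; elim: m => [|m [q1 [q2 [pq1 q2p z1 z2]]]].
  by exists p, p; rewrite muln0; split => //; lia.
have [r1 q1r1 zr1] := zero_pair_spreads_right z1.
have [r2 r2q2 zr2] := zero_pair_spreads_left z2.
by exists r1, r2; rewrite mulnS eca_iterD; split => //; lia.
Qed.

Definition quiet_word (w : seq bool) : bool :=
  all (fun j => pair_free_word (iter j (step_word 104) w)) (iota 0 4).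

(* Windows on cells i-2 .. i+6, the second one with cells i-2 .. i replaced by v: if neither
   contains a wall during three steps, they agree on cell i. *)
Definition determination_check : bool :=
  all (fun w => all (fun v => quiet_word w && quiet_word (v ++ drop 3 w) ==>
                              (nth false w 2 == nth false (v ++ drop 3 w) 2)) (words 3))
      (words 9).

Lemma determination_check_ok : determination_check.
Proof. by vm_compute. Qed.

Definition quiet (y : config) : Prop :=
  forall j p, j <= 3 -> ~~ zero_pair (eca_iter 104 j y) p.

Lemma quiet_word_window y s : quiet y -> quiet_word (window y s 9).
Proof.
move=> qy; apply/allP => j; rewrite mem_iota => /andP [_ j4].
have := iter_step_word_window 104 y s (9 - 2 * j) j; rewrite subnK; last lia.
by move->; apply: pair_free_word_window => p; apply: qy; lia.
Qed.

Lemma quiet_determined y z i : quiet y -> quiet z ->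
  (forall k, 0 < k <= 6 -> y (i + Z.of_nat k)%Z = z (i + Z.of_nat k)%Z) -> y i = z i.
Proof.
move=> qy qz yz.
move: determination_check_ok => /(all_words_window y (i - 2)%Z).
move=> /allP /(_ (window z (i - 2)%Z 3)).
have -> : window z (i - 2) 3 ++ drop 3 (window y (i - 2) 9) = window z (i - 2) 9.
  apply: (@eq_from_nth _ false) => [|k]; rewrite size_cat size_drop !size_mkseq // => k9.
  rewrite nth_cat size_mkseq nth_drop; case: ltnP => k3; rewrite !nth_mkseq //; try lia.
  by rewrite (_ : (i - 2 + Z.of_nat (3 + (k - 3)) = i + Z.of_nat (k - 2))%Z) ?yz;
    try congr z; lia.
move=> /(_ (mem_words (size_mkseq _ _))).
rewrite !quiet_word_window // => /eqP; rewrite !nth_mkseq //.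
by rewrite (_ : (i - 2 + Z.of_nat 2 = i)%Z); last lia.
Qed.

Lemma quiet_agree y z (n : Z) : quiet y -> quiet z ->
  (forall i, (n <= i)%Z -> y i = z i) -> y =1 z.
Proof.
move=> qy qz yz.
suff agree m i : (n - Z.of_nat m <= i)%Z -> y i = z i.
  by move=> i; apply: (agree (Z.to_nat (n - i))); lia.
elim: m i => [|m IH] i ni; first by apply: yz; lia.
case: (Z.le_gt_cases (n - Z.of_nat m) i) => [|im]; first exact: IH.
by apply: quiet_determined => // k /andP [k0 k6]; apply: IH; lia.
Qed.

Lemma SInv104_of_zero_pair u w t0 p : u <> [::] ->
  zero_pair (eca_iter 104 t0 (periodic u)) p -> SInv 104 u w.
Proof.
move=> u0 zp.
set L := Z.of_nat (size u); set n := Z.of_nat (size w); set T := Z.of_nat t0.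
have L1 : (1 <= L)%Z.
  have : 0 < size u by rewrite lt0n size_eq0; apply/eqP.
  by rewrite /L; lia.
(* Walls of the orbit of p_u at time t0, outside the light cone of the patch. *)
set R := (p + Z.abs (n + T - p) * L)%Z; set Q := (p + - Z.abs (p + T + 2) * L)%Z.
have nR : (n + T <= R)%Z by rewrite /R; nia.
have QT : (Q <= - T - 2)%Z by rewrite /Q; nia.
have zR : zero_pair (eca_iter 104 t0 (periodic u)) R.
  apply: (zero_pair_periodic (s := Z.abs (n + T - p) * L) _ zp) => i.
  exact: periodic_shift.
have zQ : zero_pair (eca_iter 104 t0 (periodic u)) Q.
  apply: (zero_pair_periodic (s := - Z.abs (p + T + 2) * L) _ zp) => i.
  exact: periodic_shift.
have right m i : (R <= i)%Z ->
    eca_iter 104 (m + t0) (patch u w) i = eca_iter 104 (m + t0) (periodic u) i.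
  rewrite !eca_iterD; apply: (eca104_wall_right zR) => j Rj.
  by apply: eca_iter_patch_out; lia.
have left m i : (i <= Q + 1)%Z ->
    eca_iter 104 (m + t0) (patch u w) i = eca_iter 104 (m + t0) (periodic u) i.
  rewrite !eca_iterD; apply: (eca104_wall_left zQ) => j jQ.
  by apply: eca_iter_patch_out; lia.
exists (R - Q)%Z => t; exists Q => i diff.
have [t0t|tt0] := leqP t0 t.
  move: diff; rewrite -(subnK t0t) => diff.
  have /Z.nle_gt ? : ~ (R <= i)%Z by move=> Ri; apply: diff; rewrite right.
  have /Z.nle_gt ? : ~ (i <= Q + 1)%Z by move=> iQ; apply: diff; rewrite left.
  lia.
have : ~ (i < - Z.of_nat t \/ n + Z.of_nat t <= i)%Z.
  by move=> it; apply: diff; rewrite eca_iter_patch_out.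
lia.
Qed.

Lemma zero_pair_diff y z q : zero_pair y q -> ~~ zero_pair z q ->
  exists2 d, (q <= d <= q + 1)%Z & y d <> z d.
Proof.
case/andP => /negbTE y0 /negbTE y1; rewrite negb_and !negbK => /orP [z0|z1].
  by exists q; [lia | rewrite y0 z0].
by exists (q + 1)%Z; [lia | rewrite y1 z1].
Qed.

Lemma zero_pair_unbounded_diff y z j p :
  (forall t q, ~~ zero_pair (eca_iter 104 t z) q) -> zero_pair (eca_iter 104 j y) p ->
  ~ exists w : Z, forall t : nat, exists a : Z, forall i : Z,
      eca_iter 104 t z i <> eca_iter 104 t y i -> (a <= i < a + w)%Z.
Proof.
move=> zfree yp [w bounded].
have [q1 [q2 [pq1 q2p z1 z2]]] := zero_pairs_spread (Z.to_nat w).+1 yp.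
rewrite -eca_iterD in z1 z2; set t := 3 * _ + j in z1 z2.
have [a inside] := bounded t.
have [d1 d1q1 /nesym /inside ?] := zero_pair_diff z1 (zfree t q1).
have [d2 d2q2 /nesym /inside ?] := zero_pair_diff z2 (zfree t q2).
lia.
Qed.

Lemma early_zero_pair_of_mismatch u w : quiet (periodic u) ->
  ~~ matches (fun k => periodic u (Z.of_nat k)) w ->
  exists j p, j <= 3 /\ zero_pair (eca_iter 104 j (patch u w)) p.
Proof.
move=> qb /matchesP mismatch; apply: NNPP => none.
have qc : quiet (patch u w).
  by move=> j p j3; apply/negP => zp; apply: none; exists j, p.
have agree := @quiet_agree _ _ (Z.of_nat (size w)) qc qb.
apply: mismatch => k kw; rewrite -(patch_in u) // agree // => i wi.
by apply: patch_out; lia.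
Qed.

Lemma SInv104_iff_matches u w :
  (forall t p, ~~ zero_pair (eca_iter 104 t (periodic u)) p) ->
  SInv 104 u w <-> matches (fun k => periodic u (Z.of_nat k)) w.
Proof.
move=> bfree; split => [Sw | /patch_matches wb].
  apply/negPn/negP => /(early_zero_pair_of_mismatch (fun j p _ => bfree j p)) [j [p [_ zp]]].
  exact: zero_pair_unbounded_diff bfree zp Sw.
exists 0%Z => t; exists 0%Z => i []; exact/esym/eca_iter_ext.
Qed.

Lemma SInv_cc_le_const N u : (forall w, SInv N u w) -> forall n, SInv_cc_le N u n 0.
Proof.
by move=> Sw n i _; exists (PLeaf _ _ true); split=> // x y; split=> // _; apply: Sw.
Qed.

Lemma SInv_cc_le_matches N u g : (forall w, SInv N u w <-> matches g w) ->
  forall n, SInv_cc_le N u n 2.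
Proof.
move=> Sw n i _.
pose alice (x : i.-tuple bool) := matches g x.
pose bob (y : (n - i).-tuple bool) := matches (fun k => g (i + k)) y.
exists (PAlice alice (PBob bob (PLeaf _ _ true) (PLeaf _ _ false)) (PLeaf _ _ false)).
split=> // x y; rewrite Sw matches_cat size_tuple /= /alice /bob.
by case: (matches g x); case: (matches _ y).
Qed.

Theorem mainTheorem16 :
  forall u : seq bool, u <> [::] ->
    exists c : nat, forall n : nat, SInv_cc_le 104 u n c.
Proof.
move=> u u0.
have [[t [p zp]] | no_wall] :=
  classic (exists t p, zero_pair (eca_iter 104 t (periodic u)) p).
  by exists 0 => n; apply: SInv_cc_le_const => w; apply: SInv104_of_zero_pair zp.
exists 2 => n; apply: (@SInv_cc_le_matches _ _ (fun k => periodic u (Z.of_nat k))) => w.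
by apply: SInv104_iff_matches => t p; apply/negP => zp; apply: no_wall; exists t, p.
Qed.
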